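(* Let $\alpha,\beta>0$, $\tau>0$, and let $\{S_{\alpha,\beta}^n\}_{n\in\mathbb{N}_0}\subset\mathcal{B}(X)$ be a discrete $(\alpha,\beta)$-resolvent family generated by a closed linear operator $A$ on a Banach space $X$ (so that $\tau^{-\alpha}\in\rho(A)$). Let $R_\tau:=\tau^{-\alpha}(\tau^{-\alpha}-A)^{-1}$. Then for every $x\in X$, $$S_{\alpha,\beta}^0x=a_{0,1}R_\tau x,\qquad S_{\alpha,\beta}^1x=a_{1,1}R_\tau x+a_{1,2}R_\tau^2 x,$$ and for every $n\geq 2$, $$S_{\alpha,\beta}^nx=\sum_{j=1}^{n+1}a_{n,j}R_\tau^j x,$$ where the scalars $a_{n,l}$ are defined as follows (writing $k(\cdot)$ for $k^\alpha_\tau(\cdot)$): $a_{0,1}:=k_\tau^\beta(0)$, $a_{1,1}:=\big(k_\tau^\beta(1)k(0)-k_\tau^\beta(0)k(1)\big)k(0)^{-1}$, $a_{1,2}:=k_\tau^\beta(0)k(1)k(0)^{-1}$, and for $n\geq 2$: $a_{n,n+1}:=k(1)a_{n-1,n}k(0)^{-1}$; $a_{n,1}:=\Big(k_\tau^\beta(n)k(0)-\sum_{j=0}^{n-1}k(n-j)a_{j,1}\Big)k(0)^{-1}$; $a_{n,l}:=\Big(\sum_{j=l-2}^{n-1}k(n-j)a_{j,l-1}-\sum_{j=l-1}^{n-1}k(n-j)a_{j,l}\Big)k(0)^{-1}$ for $2\leq l\leq n$.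
   Context: Fix a step size $\tau>0$. For $\gamma>0$ and $n\in\mathbb{N}_0$ let $k_\tau^\gamma(n):=\frac{\tau^{\gamma-1}\Gamma(\gamma+n)}{\Gamma(\gamma)\Gamma(n+1)}$ (so $k^\alpha_\tau(0)=\tau^{\alpha-1}\neq 0$). For $\alpha,\beta>0$, a sequence $\{S_{\alpha,\beta}^n\}_{n\in\mathbb{N}_0}\subset\mathcal{B}(X)$ is called a discrete $(\alpha,\beta)$-resolvent family generated by the closed operator $A:D(A)\subset X\to X$ if (1) $S^n_{\alpha,\beta}x\in D(A)$ for all $x\in X$, $n\in\mathbb N_0$, and $AS_{\alpha,\beta}^nx=S_{\alpha,\beta}^nAx$ for all $x\in D(A)$, $n\in\mathbb{N}_0$; (2) for every $x\in X$ and $n\in\mathbb{N}_0$, $S_{\alpha,\beta}^nx=k^\beta_\tau(n)x+\tau A\sum_{j=0}^n k^\alpha_\tau(n-j)S_{\alpha,\beta}^jx$. *)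

From HB Require Import structures.
From mathcomp Require Import all_boot all_order all_algebra.
From mathcomp Require Import all_classical all_reals all_analysis.
Set Implicit Arguments. Unset Strict Implicit. Unset Printing Implicit Defensive.
Import Order.TTheory GRing.Theory Num.Theory.
Import numFieldNormedType.Exports.
Local Open Scope classical_set_scope.
Local Open Scope ring_scope.

(* The kernel k_tau^gamma(n) = tau^(gamma-1) Gamma(gamma+n) / (Gamma(gamma) n!).
   Gamma is not in the library; we use the identity
   Gamma(gamma+n)/Gamma(gamma) = prod_{i<n} (gamma+i) (Pochhammer symbol). *)
Definition kfun (R : realType) (tau gamma : R) (n : nat) : R :=
  tau `^ (gamma - 1) * (\prod_(i < n) (gamma + i%:R)) / (n`!)%:R.

Section Ops.
Variables (K : numFieldType) (X : normedModType K).

Definition linear_operator (D : set X) (A : X -> X) : Prop :=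
  D 0 /\
  (forall (c : K) (x y : X), D x -> D y -> D (c *: x + y)) /\
  (forall (c : K) (x y : X), D x -> D y -> A (c *: x + y) = c *: A x + A y).

Definition closed_operator (D : set X) (A : X -> X) : Prop :=
  linear_operator D A /\ closed [set p : X * X | D p.1 /\ p.2 = A p.1].

Definition bounded_operator (T : X -> X) : Prop :=
  linear T /\ continuous T.

Definition is_resolvent (D : set X) (A : X -> X) (lam : K) (Rl : X -> X) : Prop :=
  bounded_operator Rl /\
  (forall x, D (Rl x) /\ lam *: Rl x - A (Rl x) = x) /\
  (forall y, D y -> Rl (lam *: y - A y) = y).
End Ops.

Definition discrete_resolvent_family (R : realType) (K : numFieldType)
    (iota : {rmorphism R -> K}) (X : normedModType K)
    (alpha beta tau : R) (D : set X) (A : X -> X) (S : nat -> X -> X) : Prop :=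
  (forall n, bounded_operator (S n)) /\
  (forall n x, D (S n x)) /\
  (forall n x, D x -> A (S n x) = S n (A x)) /\
  (forall n x, S n x = iota (kfun tau beta n) *: x
      + iota tau *: A (\sum_(0 <= j < n.+1) iota (kfun tau alpha (n - j)) *: S j x)).

(* The coefficients a_{n,l}; k = k_tau^alpha, kb = k_tau^beta.
   [arow k kb prev n l] computes a_{n,l} from the earlier rows [prev j l], j < n. *)
Definition arow (R : realType) (k kb : nat -> R) (prev : nat -> nat -> R)
    (n l : nat) : R :=
  if n == 0%N then (if l == 1%N then kb 0%N else 0)
  else if n == 1%N then
    (if l == 1%N then (kb 1%N * k 0%N - kb 0%N * k 1%N) / k 0%N
     else if l == 2%N then kb 0%N * k 1%N / k 0%N else 0)
  else if l == n.+1 then k 1%N * prev n.-1 n / k 0%N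
  else if l == 1%N then
    (kb n * k 0%N - \sum_(0 <= j < n) k (n - j)%N * prev j 1%N) / k 0%N
  else if (2 <= l <= n)%N then
    (\sum_(l - 2 <= j < n) k (n - j)%N * prev j l.-1
     - \sum_(l - 1 <= j < n) k (n - j)%N * prev j l) / k 0%N
  else 0.

Fixpoint atab (R : realType) (k kb : nat -> R) (n : nat) : nat -> nat -> R :=
  match n with
  | 0 => fun _ l => arow k kb (fun _ _ => 0) 0 l
  | m.+1 => let p := atab k kb m in
            fun j l => if (j <= m)%N then p j l else arow k kb p m.+1 l
  end.

Definition acoef (R : realType) (alpha beta tau : R) (n l : nat) : R :=
  atab (kfun tau alpha) (kfun tau beta) n n l.

From HB Require Import structures.
From mathcomp Require Import all_boot all_order all_algebra.
From mathcomp Require Import all_classical all_reals all_analysis.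
From mathcomp Require Import ring zify.
Import Order.TTheory GRing.Theory Num.Theory.
Import numFieldNormedType.Exports.
Local Open Scope classical_set_scope.
Local Open Scope ring_scope.

(* Write k = k_tau^alpha, kb = k_tau^beta and mu = tau k(0) = tau^alpha.  Moving
   the j = n term of the defining equation to the left gives
     (1 - mu A) S^n x = kb(n) x + tau sum_{j<n} k(n-j) A S^j x.
   For n = 0 this says that R_tau := kb(0)^-1 S^0 inverts 1 - mu A, so that
   mu R_tau = (tau^-alpha - A)^-1.  Applying R_tau and using the resolvent
   identity R_tau A = mu^-1 (R_tau - 1) on D(A) yields
     S^n = kb(n) R_tau + k(0)^-1 sum_{j<n} k(n-j) (R_tau - 1) S^j,
   and strong induction on n gives S^n = sum_l c_{n,l} R_tau^l for any array c
   with c_{n,0} = 0, c_{n,l} = 0 for l > n+1 and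
     c_{n,l} = [l = 1] kb(n) + k(0)^-1 sum_{j<n} k(n-j) (c_{j,l-1} - c_{j,l}). *)

Lemma sum_vanishing_prefix (V : nmodType) (F : nat -> V) (m n : nat) :
  (forall j, (j < m)%N -> F j = 0) ->
  \sum_(0 <= j < n) F j = \sum_(m <= j < n) F j.
Proof.
move=> F0; have [mn|nm] := leqP m n.
  rewrite (big_cat_nat (leq0n m) mn) /= big1_seq ?add0r //.
  by move=> j /andP[_]; rewrite mem_index_iota => /andP[_ /F0].
rewrite [RHS]big_geq 1?ltnW // big1_seq //.
by move=> j /andP[_]; rewrite mem_index_iota => /andP[_ jn]; apply/F0/(ltn_trans jn).
Qed.

Section Coefficients.
Context {R : realType}.
Variables (k kb : nat -> R).
Hypothesis k0_neq0 : k 0%N != 0.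

(* The table a_{n,l}: row n of the table built up to stage n. *)
Definition coef (n l : nat) : R := atab k kb n n l.

Lemma atab_prefix m j l : (j <= m)%N -> atab k kb m j l = coef j l.
Proof.
elim: m => [|m IH] jm; first by rewrite leqn0 in jm; rewrite (eqP jm).
rewrite /=; case: ifP => [/IH //|jNm].
have -> : j = m.+1 by apply/eqP; rewrite eqn_leq jm ltnNge jNm.
by rewrite /coef /= ltnn.
Qed.

Lemma arow_ext p q n l : (forall j l', (j < n)%N -> p j l' = q j l') ->
  arow k kb p n l = arow k kb q n l.
Proof.
case: n => [|[|n]] pq //; rewrite /arow pq //.
have sum_ext m l' : \sum_(m <= j < n.+2) k (n.+2 - j)%N * p j l' =
                    \sum_(m <= j < n.+2) k (n.+2 - j)%N * q j l'.
  by apply: eq_big_nat => j /andP[_ jn]; rewrite pq.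
by rewrite !sum_ext.
Qed.

Lemma coef_unfold n l : coef n l = arow k kb coef n l.
Proof.
case: n => [|m] //; rewrite /coef /= ltnn; apply: arow_ext => j l' jm.
by rewrite atab_prefix // -ltnS.
Qed.

Lemma coef_l0 n : coef n 0 = 0.
Proof. by rewrite coef_unfold /arow; case: n => [|[|n]]. Qed.

Lemma coef_above n l : (n.+1 < l)%N -> coef n l = 0.
Proof.
rewrite coef_unfold /arow; case: n => [|[|n]] ln.
- by case: l ln => [|[|l]].
- by case: l ln => [|[|[|l]]].
- rewrite ifF; last by apply/negbTE; rewrite neq_ltn ln orbT.
  case: l ln => [|[|l]] ln //=.
  by rewrite ifF //; apply/negbTE; rewrite -leqNgt; lia.
Qed.

Lemma conv_support n l :
  \sum_(0 <= j < n) k (n - j)%N * coef j l =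
  \sum_(l.-1 <= j < n) k (n - j)%N * coef j l.
Proof.
apply: sum_vanishing_prefix => j jl; rewrite coef_above ?mulr0 //.
by case: l jl => [|l] //=; rewrite ltnS.
Qed.

Lemma coef_rec n l : coef n l = (l == 1%N)%:R * kb n +
  (\sum_(0 <= j < n) k (n - j)%N * (coef j l.-1 - coef j l)) / k 0%N.
Proof.
case: n => [|[|n]].
- rewrite big_geq // mul0r addr0 coef_unfold /arow /=.
  by case: (l == 1%N); rewrite ?mul1r ?mul0r.
- have row0 l' : coef 0 l' = if l' == 1%N then kb 0 else 0 by [].
  rewrite big_nat1 subn0 coef_unfold /arow /= !row0.
  by case: l => [|[|[|l]]] /=; field.
under eq_bigr do rewrite mulrBr.
rewrite sumrB conv_support [X in _ - X]conv_support coef_unfold /arow /=.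
case: ifP => [/eqP ->|lNtop] /=.
  by rewrite big_nat1 big_geq // subSS subSnn; field.
case: ifP => [/eqP ->|lN1] /=.
  rewrite [X in _ = _ + (X - _) / _]big1 => [|j _]; last by rewrite coef_l0 mulr0.
  by field.
case: ifP => [_|lout]; first by rewrite subn1 subn2 mul0r add0r.
case: l lNtop lN1 lout => [|l] lNtop lN1 lout; first by rewrite subrr !mul0r addr0.
rewrite !big_geq ?subrr ?mul0r ?addr0 //=; move: lNtop lN1 lout; lia.
Qed.
End Coefficients.

Definition coef_recursion {F : fieldType} (k kb : nat -> F) (c : nat -> nat -> F) :
    Prop :=
  [/\ forall n, c n 0%N = 0,
      forall n l, (n.+1 < l)%N -> c n l = 0 &
      forall n l, c n l = (l == 1%N)%:R * kb n +
        (k 0%N)^-1 * \sum_(0 <= j < n) k (n - j)%N * (c j l.-1 - c j l)].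

Lemma coef_recursion_morph {R : realType} {F : fieldType} (iota : {rmorphism R -> F})
    (k kb : nat -> R) : k 0%N != 0 ->
  coef_recursion (iota \o k) (iota \o kb) (fun n l => iota (coef k kb n l)).
Proof.
move=> k0_neq0; split=> [n|n l ln|n l]; first by rewrite coef_l0 rmorph0.
  by rewrite coef_above ?rmorph0.
rewrite coef_rec // rmorphD [_ / k 0%N]mulrC !rmorphM rmorph_nat fmorphV /=.
by rewrite rmorph_sum; congr (_ + _ * _); apply: eq_bigr => j _; rewrite rmorphM rmorphB.
Qed.

Section LinearOperators.
Context {K : numFieldType} {X : normedModType K}.
Implicit Types (D : set X) (A f : X -> X).

Lemma linear_operatorT f : linear f -> linear_operator setT f.
Proof. by move=> f_lin; split=> //; split=> c x y _ _ //; apply: f_lin. Qed.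

Lemma operator_lincomb {D A} {I : Type} (r : seq I) (P : pred I)
    (c : I -> K) (v : I -> X) :
  linear_operator D A -> (forall i, D (v i)) ->
  D (\sum_(i <- r | P i) c i *: v i) /\
  A (\sum_(i <- r | P i) c i *: v i) = \sum_(i <- r | P i) c i *: A (v i).
Proof.
move=> [D0 [DC AC]] Dv; apply: (big_rec2 (fun u w => D u /\ A u = w)).
  split=> //; have := AC 1 0 0 D0 D0; rewrite !scale1r addr0 => A0.
  by apply: (@addrI _ (A 0)); rewrite addr0 -A0.
by move=> i u w _ [Du <-]; split; [apply: DC | apply: AC].
Qed.

Lemma operatorZ {D A} a y : linear_operator D A -> D y ->
  D (a *: y) /\ A (a *: y) = a *: A y.
Proof.
move=> A_lin Dy; have := operator_lincomb [:: tt] xpredT (fun=> a) (fun=> y) A_lin (fun=> Dy).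
by rewrite !big_seq1.
Qed.

Lemma linear_sum f {I : Type} (r : seq I) (P : pred I) (c : I -> K) (v : I -> X) :
  linear f -> f (\sum_(i <- r | P i) c i *: v i) = \sum_(i <- r | P i) c i *: f (v i).
Proof. by move=> /linear_operatorT f_lin; case: (operator_lincomb r P c v f_lin). Qed.

Lemma linearZ_fun f a u : linear f -> f (a *: u) = a *: f u.
Proof. by move=> /linear_operatorT f_lin; case: (operatorZ a u f_lin I). Qed.

Lemma linearD_fun f u v : linear f -> f (u + v) = f u + f v.
Proof. by move=> f_lin; have := f_lin 1 u v; rewrite !scale1r. Qed.

Lemma linearB_fun f u v : linear f -> f (u - v) = f u - f v.
Proof. by move=> f_lin; rewrite addrC -scaleN1r f_lin scaleN1r addrC. Qed.

Lemma iter_shift f (c : nat -> K) (x : X) (M : nat) :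
  linear f -> (0 < M)%N -> c 0%N = 0 -> c M.-1 = 0 ->
  f (\sum_(0 <= l < M) c l *: iter l f x) - \sum_(0 <= l < M) c l *: iter l f x =
  \sum_(0 <= l < M) (c l.-1 - c l) *: iter l f x.
Proof.
move=> f_lin; case: M => [|M] // _ c0 cM.
under [RHS]eq_bigr do rewrite scalerBl.
rewrite sumrB linear_sum //; congr (_ - _).
by rewrite big_nat_recr //= big_nat_recl //= cM c0 !scale0r addr0 add0r.
Qed.
End LinearOperators.

Section ResolventFamily.
Context {K : numFieldType} {X : normedModType K}.
Context {D : set X} {A : X -> X} {S : nat -> X -> X} {k kb : nat -> K} {t : K}.
Hypothesis A_lin : linear_operator D A.
Hypothesis S0_bounded : bounded_operator (S 0%N).
Hypothesis S_D : forall n x, D (S n x).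
Hypothesis S_A : forall n x, D x -> A (S n x) = S n (A x).
Hypothesis S_eq : forall n x,
  S n x = kb n *: x + t *: A (\sum_(0 <= j < n.+1) k (n - j)%N *: S j x).
Hypotheses (t_neq0 : t != 0) (k0_neq0 : k 0%N != 0) (kb0_neq0 : kb 0%N != 0).

(* mu = tau k(0) = tau^alpha is the inverse of the spectral parameter. *)
Local Notation mu := (t * k 0%N).

Let mu_neq0 : mu != 0. Proof. exact: mulf_neq0. Qed.
Let S0_lin : linear (S 0%N). Proof. by case: S0_bounded. Qed.

(* The normalised first term kb(0)^-1 S^0: it will be R_tau = (1 - mu A)^-1. *)
Definition Rtau (x : X) : X := (kb 0%N)^-1 *: S 0%N x.

Lemma S_isolated n x : S n x - mu *: A (S n x) =
  kb n *: x + t *: \sum_(0 <= j < n) k (n - j)%N *: A (S j x).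
Proof.
rewrite {1}S_eq (operator_lincomb _ xpredT _ (S^~ x) A_lin (S_D^~ x)).2.
by rewrite big_nat_recr //= subnn scalerDr scalerA addrA addrK.
Qed.

Lemma Rtau_lin : linear Rtau.
Proof. by move=> a u v; rewrite /Rtau S0_lin scalerDr !scalerA [a * _]mulrC. Qed.

Lemma Rtau_D x : D (Rtau x).
Proof. exact: (operatorZ _ _ A_lin (S_D 0 x)).1. Qed.

Lemma Rtau_A_comm y : D y -> Rtau (A y) = A (Rtau y).
Proof. by move=> Dy; rewrite /Rtau -S_A // (operatorZ _ _ A_lin (S_D 0 y)).2. Qed.

Lemma Rtau_right x : Rtau x - mu *: A (Rtau x) = x.
Proof.
rewrite /Rtau (operatorZ _ _ A_lin (S_D 0 x)).2 scalerA mulrC -scalerA -scalerBr.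
by rewrite S_isolated big_geq // scaler0 addr0 scalerA mulVf // scale1r.
Qed.

Lemma Rtau_left y : D y -> Rtau (y - mu *: A y) = y.
Proof.
move=> Dy; rewrite (linearB_fun _ _ _ Rtau_lin) (linearZ_fun _ _ _ Rtau_lin).
by rewrite Rtau_A_comm // Rtau_right.
Qed.

Lemma Rtau_A y : D y -> Rtau (A y) = mu^-1 *: (Rtau y - y).
Proof.
move=> Dy; rewrite -{3}(Rtau_right y) opprB addrC subrK scalerA mulVf //.
by rewrite scale1r Rtau_A_comm.
Qed.

Lemma Rtau_resolvent : is_resolvent D A mu^-1 (fun x => mu *: Rtau x).
Proof.
split; [split|split].
- by move=> a u v; rewrite Rtau_lin scalerDr !scalerA [a * _]mulrC.
- move=> x; do 2!apply: continuousZl_tmp; exact: S0_bounded.2.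
- move=> x; have [DmR AmR] := operatorZ mu _ A_lin (Rtau_D x).
  by split=> //; rewrite AmR scalerA mulVf // scale1r Rtau_right.
- move=> y Dy; rewrite -(linearZ_fun _ _ _ Rtau_lin).
  by rewrite scalerBr scalerA divff // scale1r Rtau_left.
Qed.

(* Applying R_tau to the defining equation expresses S^n through R_tau and
   the earlier terms S^j, j < n. *)
Lemma S_recursion n x : S n x = kb n *: Rtau x +
  (k 0%N)^-1 *: \sum_(0 <= j < n) k (n - j)%N *: (Rtau (S j x) - S j x).
Proof.
rewrite -{1}(Rtau_left _ (S_D n x)) S_isolated.
rewrite (linearD_fun _ _ _ Rtau_lin) !(linearZ_fun _ _ _ Rtau_lin).
rewrite (linear_sum _ _ _ _ _ Rtau_lin).
congr (_ + _); rewrite !scaler_sumr; apply: eq_bigr => j _.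
by rewrite Rtau_A // !scalerA; congr (_ *: _); field; apply/andP.
Qed.

Lemma S_expansion (c : nat -> nat -> K) : coef_recursion k kb c ->
  forall x n M, (n.+2 <= M)%N -> S n x = \sum_(0 <= l < M) c n l *: iter l Rtau x.
Proof.
move=> [c_l0 c_above c_rec] x n; elim/ltn_ind: n => n IH M nM.
have Rtau_sub1 j : (j < n)%N -> Rtau (S j x) - S j x =
    \sum_(0 <= l < M) (c j l.-1 - c j l) *: iter l Rtau x.
  move=> jn; rewrite (IH j jn M); last by lia.
  by apply: iter_shift Rtau_lin _ _ _; [lia | exact: c_l0 | apply: c_above; lia].
have first_column : \sum_(0 <= l < M) ((l == 1%N)%:R * kb n) *: iter l Rtau x =
    kb n *: Rtau x.
  rewrite big_ltn; last by lia.
  rewrite big_ltn; last by lia.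
  rewrite big1_seq => [|l /andP[_]]; last first.
    by rewrite mem_index_iota; case: l => [|[|l]] //= _; rewrite mul0r scale0r.
  by rewrite mul0r scale0r add0r mul1r addr0.
have convolution : (k 0%N)^-1 *: \sum_(0 <= j < n) k (n - j)%N *:
      \sum_(0 <= l < M) (c j l.-1 - c j l) *: iter l Rtau x =
    \sum_(0 <= l < M) ((k 0%N)^-1 *
      \sum_(0 <= j < n) k (n - j)%N * (c j l.-1 - c j l)) *: iter l Rtau x.
  rewrite scaler_sumr; under eq_bigr do rewrite scalerA scaler_sumr.
  rewrite exchange_big /=; apply: eq_bigr => l _.
  rewrite mulr_sumr scaler_suml; apply: eq_bigr => j _.
  by rewrite !scalerA mulrA.
rewrite S_recursion; under eq_big_nat => j /andP[_ jn] do rewrite (Rtau_sub1 j jn).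
under [RHS]eq_bigr do rewrite c_rec scalerDl.
by rewrite big_split /= first_column convolution.
Qed.
End ResolventFamily.
Arguments Rtau {K X} S kb x.

Lemma kfun0 (R : realType) (tau gamma : R) : kfun tau gamma 0 = tau `^ (gamma - 1).
Proof. by rewrite /kfun big_ord0 mulr1 fact0 divr1. Qed.

Lemma tau_kfun0 (R : realType) (tau alpha : R) : 0 < tau ->
  tau * kfun tau alpha 0 = tau `^ alpha.
Proof.
move=> tau_gt0; rewrite kfun0 -{1}(powRr1 (ltW tau_gt0)) -powRD.
  by rewrite addrC subrK.
by rewrite (gt_eqF tau_gt0) implybT.
Qed.

Theorem theorem3p11 (R : realType) (K : numFieldType) (iota : {rmorphism R -> K})
    (X : completeNormedModType K) (alpha beta tau : R)
    (D : set X) (A : X -> X) (S : nat -> X -> X) :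
  0 < alpha -> 0 < beta -> 0 < tau ->
  closed_operator D A ->
  discrete_resolvent_family iota alpha beta tau D A S ->
  exists Rl : X -> X,
    is_resolvent D A (iota (tau `^ (- alpha))) Rl /\
    let Rt := fun x => iota (tau `^ (- alpha)) *: Rl x in
    (forall x, S 0%N x = iota (acoef alpha beta tau 0 1) *: Rt x) /\
    (forall x, S 1%N x = iota (acoef alpha beta tau 1 1) *: Rt x
                        + iota (acoef alpha beta tau 1 2) *: Rt (Rt x)) /\
    (forall (n : nat), (2 <= n)%N -> forall x,
        S n x = \sum_(1 <= j < n.+2) iota (acoef alpha beta tau n j) *: iter j Rt x).
Proof.
move=> _ _ tau_gt0 [A_lin _] [S_bounded [S_D [S_A S_eq]]].
pose k := iota \o kfun tau alpha; pose kb := iota \o kfun tau beta.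
have kfun0_neq0 gamma : kfun tau gamma 0 != 0 by rewrite kfun0 gt_eqF ?powR_gt0.
have iota_kfun0_neq0 gamma : iota (kfun tau gamma 0) != 0 by rewrite fmorph_eq0.
have t_neq0 : iota tau != 0 by rewrite fmorph_eq0 gt_eqF.
have mu_neq0 : iota tau * k 0%N != 0 := mulf_neq0 t_neq0 (iota_kfun0_neq0 alpha).
have lamE : iota (tau `^ (- alpha)) = (iota tau * k 0%N)^-1.
  by rewrite powRN -tau_kfun0 // fmorphV rmorphM.
exists (fun x => (iota tau * k 0%N) *: Rtau S kb x); rewrite lamE.
split; first exact: (Rtau_resolvent A_lin (S_bounded 0%N) S_D S_A S_eq t_neq0
  (iota_kfun0_neq0 alpha) (iota_kfun0_neq0 beta)).
have -> : (fun x => (iota tau * k 0%N)^-1 *: ((iota tau * k 0%N) *: Rtau S kb x)) =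
    Rtau S kb by apply/funext => x; rewrite scalerA mulVf ?scale1r.
have coefs := coef_recursion_morph iota (kfun tau alpha) (kfun tau beta) (kfun0_neq0 alpha).
have expansion := S_expansion A_lin (S_bounded 0%N) S_D S_A S_eq t_neq0
  (iota_kfun0_neq0 alpha) (iota_kfun0_neq0 beta) _ coefs.
have [a_l0 _ _] := coefs.
split; [|split].
- by move=> x; rewrite (expansion x 0 2) // big_ltn // big_nat1 a_l0 scale0r add0r.
- move=> x; rewrite (expansion x 1 3) // big_ltn // big_ltn // big_nat1.
  by rewrite a_l0 scale0r add0r.
- by move=> n n_ge2 x; rewrite (expansion x n n.+2) // big_ltn // a_l0 scale0r add0r.
Qed.
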